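(* Let $A$ be a finite alphabet and $P\in I(A^* )$ defined by $P(u,v)=\binom{v}{u}$. For all $u,v\in A^*$ and every integer $d$ (for $d<0$, $P^d$ means $(P^{-1})^{-d}$, and $P^0=\delta$), $$P^d(u,v)=d^{|v|-|u|}P(u,v),$$ with the convention $0^0=1$. Equivalently, for $d\ne0$, letting $D_d\in I(A^* )$ be $D_d(u,v)=d^{|u|}\delta(u,v)$, one has $P^d=D_d^{-1}PD_d=D_{1/d}PD_d$; in particular $P^{-1}=D_{-1}PD_{-1}$.
   Context: $A^*$ is the set of finite words over $A$; $|w|$ is the length. For words $u=a_1\cdots a_k$, $v=b_1\cdots b_n$, $\binom{v}{u}$ is the number of order-preserving injections $\varphi:[k]\to[n]$ with $a_i=b_{\varphi(i)}$ for all $i$. $A^*$ is ordered by $u\le v$ iff $\binom{v}{u}>0$. $I(A^* )$ is the incidence algebra over $\mathbb{Q}$: functions on pairs $(u,v)$ with $u\le v$, convolution $(FG)(u,v)=\sum_{u\le w\le v}F(u,w)G(w,v)$, identity $\delta(u,v)=[u=v]$ (Iverson bracket). $P$ is invertible since $P(u,u)=1$. *)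

From HB Require Import structures.
From mathcomp Require Import all_boot all_order all_algebra.
Set Implicit Arguments. Unset Strict Implicit. Unset Printing Implicit Defensive.
Import Order.TTheory GRing.Theory Num.Theory.
Local Open Scope ring_scope.

Section Incidence.
Variable A : finType.

(* Elements of the incidence algebra I(A^* ) over Q, represented as functions
   on all pairs; only the values on pairs u <= v (subword order) matter, and all
   operations below produce 0 on incomparable pairs. *)
Definition incf := seq A -> seq A -> rat.

Definition binomw (v u : seq A) : nat :=
  (\sum_(m : (size v).-tuple bool) (mask m v == u))%N.

Definition subw (u v : seq A) : bool := (0 < binomw v u)%N.

Fixpoint subwords_rep (v : seq A) : seq (seq A) :=
  match v with
  | [::] => [:: [::]]
  | a :: v' => [seq a :: w | w <- subwords_rep v'] ++ subwords_rep v'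
  end.

Definition subwords (v : seq A) : seq (seq A) := undup (subwords_rep v).

Definition conv (F G : incf) : incf := fun u v =>
  \sum_(w <- subwords v | subw u w && subw w v) F u w * G w v.

Definition delta : incf := fun u v => (u == v)%:R.

Definition Pm : incf := fun u v => (binomw v u)%:R.

(* inverse of F (with F(u,u) <> 0), by the standard recursion
   G(u,u) = F(u,u)^-1,  G(u,v) = - F(v,v)^-1 * sum_{u <= w < v} G(u,w) F(w,v);
   n is fuel (size v suffices). *)
Fixpoint inv_aux (n : nat) (F : incf) (u v : seq A) : rat :=
  if u == v then (F v v)^-1 else
  match n with
  | 0 => 0
  | n'.+1 => - (F v v)^-1 *
      \sum_(w <- subwords v | subw u w && subw w v && (w != v))
         inv_aux n' F u w * F w v
  end.

Definition incinv (F : incf) : incf := fun u v =>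
  if subw u v then inv_aux (size v) F u v else 0.

Fixpoint incpow (F : incf) (n : nat) : incf :=
  match n with
  | 0 => delta
  | n'.+1 => conv (incpow F n') F
  end.

Definition incpowz (F : incf) (d : int) : incf :=
  match d with
  | Posz n => incpow F n
  | Negz n => incpow (incinv F) n.+1
  end.

Definition Dm (c : rat) : incf := fun u v => c ^+ size u * delta u v.

End Incidence.

From HB Require Import structures.
From mathcomp Require Import all_boot all_order all_algebra.
From mathcomp Require Import ring.
From Stdlib Require Import FunctionalExtensionality.
Import Order.TTheory GRing.Theory Num.Theory.
Local Open Scope ring_scope.
Set Implicit Arguments. Unset Strict Implicit.

(* Weight the binomial coefficient by a scalar: P_a(u,v) = a^(|v|-|u|) binom(v,u)
   ([Pw a] below).
   Counting the chains u <= w <= v by first choosing w inside v gives the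
   Vandermonde-type identity P_a P_b = P_(a+b), and P_0 = delta, so a |-> P_a is a
   morphism from (Q,+) to the units of the incidence algebra with P_1 = P; hence
   P^d = P_d for every integer d.  Conjugating by the diagonal D_c multiplies the
   (u,v) entry by c^(|v|-|u|), so D_c^-1 P D_c = P_c as well. *)

Lemma big_tuple_cons (R : Type) (idx : R) (op : Monoid.com_law idx) n
    (F : n.+1.-tuple bool -> R) :
  \big[op/idx]_(m : n.+1.-tuple bool) F m =
  \big[op/idx]_(b : bool) \big[op/idx]_(t : n.-tuple bool) F [tuple of b :: t].
Proof.
rewrite pair_big /=.
rewrite (reindex (fun p : bool * n.-tuple bool => [tuple of p.1 :: p.2])) //=.
exists (fun m : n.+1.-tuple bool => (thead m, [tuple of behead m])).
  by move=> [b t] _ /=; congr (_, _); apply: val_inj.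
by move=> m _; rewrite [RHS]tuple_eta.
Qed.

Lemma count_mem_map_cons (T : eqType) (x : T) (s : seq (seq T)) w :
  count_mem w (map (cons x) s) =
  (if w is y :: w' then (x == y) * count_mem w' s else 0)%N.
Proof.
rewrite count_map; case: w => [|y w].
  by rewrite (eq_count (a2 := pred0)) ?count_pred0.
case: (x =P y) => [<-|nxy].
  by rewrite mul1n; apply: eq_count => z /=; rewrite eqseq_cons eqxx.
rewrite mul0n (eq_count (a2 := pred0)) ?count_pred0 // => z /=.
by rewrite eqseq_cons; case: eqP.
Qed.

Lemma sum_undup_count (R : nmodType) (T : eqType) (s : seq T) (H : T -> R) :
  \sum_(w <- undup s) H w *+ count_mem w s = \sum_(w <- s) H w.
Proof.
rewrite -[RHS]big_undup_iterop_count; apply: eq_bigr => w _.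
rewrite Monoid.iteropE.
by elim: (count_mem w s) => [|n IH] //=; rewrite mulrS IH.
Qed.

Section Subwords.
Variable A : finType.
Implicit Types u v w : seq A.

Lemma binomw_nil w : binomw [::] w = (w == [::]).
Proof.
rewrite /binomw (big_pred1 [tuple]) /=; first by rewrite eq_sym.
by move=> t; apply/esym/eqP/val_inj; case: t => [[]].
Qed.

Lemma binomw_cons x v w : binomw (x :: v) w =
  (binomw v w + if w is y :: w' then (x == y) * binomw v w' else 0)%N.
Proof.
rewrite /binomw big_tuple_cons big_bool /= addnC; congr (_ + _)%N.
case: w => [|y w]; first by apply: big1.
case: (x =P y) => [<-|nxy] /=.
  by rewrite mul1n; apply: eq_bigr => t _; rewrite eqseq_cons eqxx.
by rewrite mul0n big1 // => t _; rewrite eqseq_cons; case: eqP.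
Qed.

Lemma binomwE v w : binomw v w = count_mem w (subwords_rep v).
Proof.
elim: v w => [|x v IH] w; first by rewrite binomw_nil /= addn0 eq_sym.
rewrite binomw_cons /= count_cat count_mem_map_cons addnC IH.
by case: w => // y w; rewrite IH.
Qed.

Lemma size_subwords_rep v w : w \in subwords_rep v -> (size w <= size v)%N.
Proof.
elim: v w => [|x v IH] w /=; first by rewrite inE => /eqP ->.
rewrite mem_cat => /orP[/mapP[z /IH hz ->] //|/IH].
by move/leq_trans; apply.
Qed.

Lemma subwords_rep_size_eq v w :
  w \in subwords_rep v -> size w = size v -> w = v.
Proof.
elim: v w => [|x v IH] w /=; first by rewrite inE => /eqP ->.
rewrite mem_cat => /orP[/mapP[z hz ->] [] /(IH _ hz) -> //|/size_subwords_rep].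
by move=> h e; move: h; rewrite e ltnn.
Qed.

Lemma binomww v : binomw v v = 1%N.
Proof.
rewrite binomwE; elim: v => [|x v IH] //=.
rewrite count_cat count_mem_map_cons eqxx mul1n IH.
apply/eqP; rewrite -[1%N]addn0 eqn_add2l; apply/eqP/count_memPn.
by apply/negP => /size_subwords_rep; rewrite /= ltnn.
Qed.

Lemma subwP u v : reflect (u \in subwords_rep v) (subw u v).
Proof.
rewrite /subw binomwE; apply: (iffP idP) => h.
  by rewrite -has_pred1 has_count.
by rewrite -has_count has_pred1.
Qed.

Lemma mem_subwords u v : (u \in subwords v) = subw u v.
Proof. by rewrite /subwords mem_undup; apply/idP/subwP. Qed.

Lemma binomw_eq0 u v : ~~ subw u v -> binomw v u = 0%N.
Proof. by rewrite /subw lt0n negbK => /eqP. Qed.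

Lemma size_subw u v : subw u v -> (size u <= size v)%N.
Proof. by move/subwP/size_subwords_rep. Qed.

Lemma subw_refl v : subw v v.
Proof. by rewrite /subw binomww. Qed.

Lemma subw_size_lt u v : subw u v -> u != v -> (size u < size v)%N.
Proof.
move=> huv; apply: contraNT; rewrite -leqNgt => hvu.
by apply/eqP/(subwords_rep_size_eq (subwP _ _ huv)); apply/eqP; rewrite eqn_leq hvu size_subw.
Qed.

Lemma subw_anti u v : subw u v -> subw v u -> u = v.
Proof.
move=> huv hvu; apply/eqP; apply: contraT => neq.
by have := subw_size_lt huv neq; rewrite ltnNge size_subw.
Qed.

Lemma binomw_exprS (R : pzRingType) (a : R) n u w : (size w <= n)%N ->
  a ^+ (n.+1 - size u) * (binomw w u)%:R = a * (a ^+ (n - size u) * (binomw w u)%:R).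
Proof.
move=> hw; case: (boolP (subw u w)) => h; last by rewrite binomw_eq0 // !mulr0.
by rewrite subSn ?exprS ?mulrA //; apply: leq_trans hw; apply: size_subw.
Qed.

Lemma binomw_cons_exprS (R : comPzRingType) (a c : R) x w u :
  a ^+ ((size w).+1 - size u) * c * (binomw (x :: w) u)%:R =
  a * (a ^+ (size w - size u) * c * (binomw w u)%:R) +
  (if u is y :: u' then (x == y)%:R * (a ^+ (size w - size u') * c * (binomw w u')%:R)
   else 0).
Proof.
rewrite binomw_cons natrD mulrDr; congr (_ + _).
  by rewrite mulrAC binomw_exprS //; ring.
by case: u => [|y u] /=; rewrite ?mulr0 // natrM subSS; ring.
Qed.

Lemma binomw_vandermonde (R : comPzRingType) (a b : R) v u :
  \sum_(w <- subwords_rep v)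
     a ^+ (size w - size u) * b ^+ (size v - size w) * (binomw w u)%:R
  = (a + b) ^+ (size v - size u) * (binomw v u)%:R.
Proof.
elim: v u => [|x v IH] u; first by rewrite /= big_seq1 /= sub0n !expr0 !mul1r.
rewrite /= big_cat big_map /=.
under eq_bigr do rewrite subSS binomw_cons_exprS.
rewrite big_split /= -mulr_sumr IH.
have -> : \sum_(w <- subwords_rep v)
    a ^+ (size w - size u) * b ^+ ((size v).+1 - size w) * (binomw w u)%:R
    = b * ((a + b) ^+ (size v - size u) * (binomw v u)%:R).
  rewrite -IH mulr_sumr big_seq [RHS]big_seq; apply: eq_bigr => w /size_subwords_rep hw.
  by rewrite subSn // exprS; ring.
rewrite binomw_cons natrD mulrDr binomw_exprS //.
case: u => [|y u] /=; first by rewrite big1 // mulr0 addr0; ring.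
by rewrite -mulr_sumr IH natrM subSS; ring.
Qed.

End Subwords.

Section IncidenceAlgebra.
Variable A : finType.
Implicit Types (u v w : seq A) (F G : incf A).

Definition Pw (a : rat) : incf A := fun u v => a ^+ (size v - size u) * Pm u v.

Lemma Pw1 : Pw 1 = @Pm A.
Proof. by do 2!apply: functional_extensionality => ?; rewrite /Pw expr1n mul1r. Qed.

Lemma Pw0 : Pw 0 = @delta A.
Proof.
apply: functional_extensionality => u; apply: functional_extensionality => v.
rewrite /Pw /Pm /delta; have [->|neq] := eqVneq u v.
  by rewrite subnn expr0 binomww mul1r.
have [huv|nuv] := boolP (subw u v); last by rewrite binomw_eq0 // mulr0.
by rewrite expr0n subn_eq0 leqNgt subw_size_lt // mul0r.
Qed.

Lemma Pw_out a u v : ~~ subw u v -> Pw a u v = 0.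
Proof. by move=> nuv; rewrite /Pw /Pm binomw_eq0 // mulr0. Qed.

Lemma conv_PwD a b : conv (Pw a) (Pw b) = Pw (a + b).
Proof.
apply: functional_extensionality => u; apply: functional_extensionality => v.
rewrite /conv /Pw /Pm -binomw_vandermonde big_mkcond /subwords.
rewrite -[in RHS]sum_undup_count.
rewrite big_seq [RHS]big_seq; apply: eq_bigr => w.
rewrite mem_undup => /subwP hwv; rewrite hwv andbT -binomwE -mulr_natr.
by case: ifP => [_|/negbT nuw]; [ring | rewrite binomw_eq0 // !mulr0 mul0rn].
Qed.

Lemma incpow_Pw a n : incpow (Pw a) n = Pw (n%:R * a).
Proof.
elim: n => [|n IH] /=; first by rewrite mul0r Pw0.
by rewrite IH conv_PwD mulrSr mulrDl mul1r.
Qed.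

Lemma conv_splitr F G u v : subw u v ->
  conv F G u v = F u v * G v v +
    \sum_(w <- subwords v | subw u w && subw w v && (w != v)) F u w * G w v.
Proof.
move=> huv; rewrite /conv big_mkcond (bigD1_seq v) ?undup_uniq ?mem_subwords ?subw_refl //=.
rewrite huv /= [in RHS]big_mkcond [in LHS]big_mkcond; congr (_ + _); apply: eq_bigr => w _.
by case: (w != v); rewrite ?andbT ?andbF.
Qed.

Lemma conv_diag F G v : conv F G v v = F v v * G v v.
Proof.
rewrite conv_splitr ?subw_refl // big1 ?addr0 // => w /andP[/andP[hvw hwv] neq].
by rewrite (subw_anti hwv hvw) eqxx in neq.
Qed.

(* The recursion defining inv_aux solves conv G F = delta entry by entry, by
   induction on |v|, so it reproduces any left inverse vanishing off the order. *)
Lemma incinv_eq F G : (forall v, F v v != 0) -> conv G F = @delta A ->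
  (forall u v, ~~ subw u v -> G u v = 0) -> incinv F = G.
Proof.
move=> F_diag GF G_out.
have G_diag v : G v v = (F v v)^-1.
  by apply: (mulIf (F_diag v)); rewrite -conv_diag GF /delta eqxx mulVf.
have inv_auxE n u v : (size v <= n)%N -> subw u v -> inv_aux n F u v = G u v.
  elim: n u v => [|n IH] u v hvn huv /=; have [<-|neq] := eqVneq u v.
  - by rewrite G_diag.
  - move: hvn; rewrite leqn0 => /nilP vnil; move: huv (size_subw huv).
    by rewrite vnil leqn0 => _ /nilP unil; rewrite unil vnil in neq.
  - by rewrite G_diag.
  have : conv G F u v = 0 by rewrite GF /delta (negbTE neq).
  rewrite conv_splitr //; move/eqP; rewrite addrC addr_eq0 => /eqP sumE.
  rewrite [X in - _ * X = _](eq_bigr (fun w => G u w * F w v)); last first.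
    move=> w /andP[/andP[huw hwv] nwv]; rewrite IH //.
    by rewrite -ltnS; apply: leq_trans (subw_size_lt hwv nwv) hvn.
  by rewrite sumE mulrNN mulrC mulfK.
apply: functional_extensionality => u; apply: functional_extensionality => v.
rewrite /incinv; have [huv|nuv] := boolP (subw u v); first exact: inv_auxE.
by rewrite G_out.
Qed.

Lemma incinv_Pm : incinv (@Pm A) = Pw (-1).
Proof.
apply: incinv_eq => [v||u v]; last exact: Pw_out.
- by rewrite /Pm binomww oner_eq0.
- by rewrite -Pw1 conv_PwD addNr Pw0.
Qed.

Lemma incpowz_Pm d : incpowz (@Pm A) d = Pw d%:~R.
Proof.
case: d => n; rewrite /incpowz; first by rewrite -Pw1 incpow_Pw mulr1.
by rewrite incinv_Pm incpow_Pw NegzE mulrNz mulrN1.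
Qed.

Lemma Dm_out c u v : ~~ subw u v -> Dm c u v = 0.
Proof.
move=> nuv; rewrite /Dm /delta; case: eqP => [eq_uv|_]; last by rewrite mulr0.
by rewrite eq_uv subw_refl in nuv.
Qed.

Lemma conv_Dmr F c u v :
  conv F (Dm c) u v = if subw u v then F u v * c ^+ size v else 0.
Proof.
have [huv|nuv] := boolP (subw u v).
  rewrite conv_splitr // big1 ?addr0; first by rewrite /Dm /delta eqxx mulr1.
  by move=> w /andP[_ nwv]; rewrite /Dm /delta (negbTE nwv) !mulr0.
apply: big1 => w /andP[huw _]; rewrite /Dm /delta.
case: eqP => [eq_wv|_]; last by rewrite !mulr0.
by rewrite -eq_wv huw in nuv.
Qed.

Lemma conv_Dml c G u v :
  conv (Dm c) G u v = if subw u v then c ^+ size u * G u v else 0.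
Proof.
have [huv|nuv] := boolP (subw u v).
  rewrite /conv big_mkcond (bigD1_seq u) ?undup_uniq ?mem_subwords //=.
  rewrite huv subw_refl big1 ?addr0; first by rewrite /Dm /delta eqxx mulr1.
  move=> w nwu; case: ifP => // _.
  by rewrite /Dm /delta eq_sym (negbTE nwu) !mulr0 mul0r.
apply: big1 => w /andP[_ hwv]; rewrite /Dm /delta.
case: eqP => [eq_uw|_]; last by rewrite mulr0 mul0r.
by rewrite eq_uw hwv in nuv.
Qed.

Lemma conv_DmV c : c != 0 -> conv (Dm c^-1) (Dm c) = @delta A.
Proof.
move=> c0; apply: functional_extensionality => u; apply: functional_extensionality => v.
rewrite conv_Dml /Dm /delta; have [<-|neq] := eqVneq u v; last by rewrite !mulr0 if_same.
by rewrite subw_refl !mulr1 exprVn mulVf // expf_neq0.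
Qed.

Lemma incinv_Dm c : c != 0 -> incinv (Dm c) = @Dm A c^-1.
Proof.
move=> c0; apply: incinv_eq => [v||]; last exact: Dm_out.
- by rewrite /Dm /delta eqxx mulr1 expf_neq0.
- exact: conv_DmV.
Qed.

Lemma conj_Dm_Pm c : c != 0 -> conv (conv (Dm c^-1) (@Pm A)) (Dm c) = Pw c.
Proof.
move=> c0; apply: functional_extensionality => u; apply: functional_extensionality => v.
rewrite conv_Dmr conv_Dml; have [huv|nuv] := boolP (subw u v); last by rewrite Pw_out.
rewrite /Pw exprVn -[in c ^+ size v](subnK (size_subw huv)) exprD.
by field; rewrite expf_neq0.
Qed.

End IncidenceAlgebra.

Theorem mainTheorem5 (A : finType) :
  (forall (d : int) (u v : seq A),
     incpowz (@Pm A) d u v = (d%:~R : rat) ^+ (size v - size u)%N * Pm u v)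
  /\
  (forall (d : int), d != 0 ->
     (forall u v : seq A,
        incpowz (@Pm A) d u v
        = conv (conv (incinv (@Dm A d%:~R)) (@Pm A)) (@Dm A d%:~R) u v) /\
     (forall u v : seq A, incinv (@Dm A d%:~R) u v = @Dm A (d%:~R)^-1 u v))
  /\
  (forall u v : seq A,
     incinv (@Pm A) u v = conv (conv (@Dm A (-1)) (@Pm A)) (@Dm A (-1)) u v).
Proof.
split; first by move=> d u v; rewrite incpowz_Pm.
split.
  move=> d d0; have dR0 : (d%:~R : rat) != 0 by rewrite intr_eq0.
  by split=> u v; rewrite incinv_Dm // incpowz_Pm conj_Dm_Pm.
have := @conj_Dm_Pm A (-1); rewrite invrN1 incinv_Pm => -> //.
Qed.
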